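(* Let $A$ be a weakly complete finitely generated $\mathcal V$-algebra and let $\mathfrak P$ be an open prime ideal of $A$. Put $A_{[\mathfrak P]}:=\varinjlim_{f\in A\setminus\mathfrak P}A[f]$ (a filtered direct limit). Then $A_{[\mathfrak P]}$ is a local ring whose maximal ideal is $\mathfrak P A_{[\mathfrak P]}:=\varinjlim_{f\notin\mathfrak P}\mathfrak P A[f]$, and its residue field $A_{[\mathfrak P]}/\mathfrak PA_{[\mathfrak P]}$ is isomorphic to the field of fractions of $A/\mathfrak P$.
   Context: $\mathcal V$ is a complete discrete valuation ring with fraction field $K$ of characteristic $0$, perfect residue field $k$ of characteristic $p>0$ and uniformizer $\pi$. A weakly complete finitely generated $\mathcal V$-algebra (f.c.t.f. algebra) is a quotient of the weak completion $\mathcal V[t_1,\dots,t_d]^\dagger$ (Monsky–Washnitzer) of a polynomial ring, equipped with the $p$-adic topology. For $f\in A$, $A[f]$ denotes the weak completion of the localization $A_f$. An ideal is open if it contains a power of $\pi$. *)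

From HB Require Import structures.
From mathcomp Require Import all_boot all_order all_algebra.
Set Implicit Arguments. Unset Strict Implicit. Unset Printing Implicit Defensive.
Import Order.TTheory GRing.Theory Num.Theory.
Local Open Scope ring_scope.

Definition pdiv (R : pzRingType) (pi : R) (m : nat) (x : R) : Prop :=
  exists y, x = pi ^+ m * y.

Definition padic_separated (R : pzRingType) (pi : R) : Prop :=
  forall x, (forall m, pdiv pi m x) -> x = 0.

Definition padic_lim (R : pzRingType) (pi : R) (u : nat -> R) (s : R) : Prop :=
  forall m, exists N, forall n, (N <= n)%N -> pdiv pi m (s - u n).

Definition is_unit (R : pzRingType) (x : R) : Prop := exists y, x * y = 1.

(* V complete DVR with uniformizer pi, Frac V of char 0, residue field
   V/(pi) perfect of characteristic p. *)
Record cdvr (V : idomainType) (pi : V) (p : nat) : Prop := {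
  cdvr_pi_nz : pi != 0;
  cdvr_pi_nonunit : pi \notin GRing.unit;
  cdvr_factor : forall x : V, x != 0 ->
      exists (u : V) (n : nat), u \is a GRing.unit /\ x = u * pi ^+ n;
  cdvr_separated : padic_separated pi;
  cdvr_complete : forall s : nat -> V,
      (forall m, exists N, forall n k, (N <= n)%N -> (N <= k)%N ->
          pdiv pi m (s n - s k)) ->
      exists l, padic_lim pi s l;
  cdvr_char0 : forall n : nat, n%:R = 0 :> V -> n = 0%N;
  cdvr_p_prime : prime p;
  cdvr_res_char : pdiv pi 1 (p%:R : V);
  cdvr_res_perfect : forall x : V, exists y, pdiv pi 1 (x - y ^+ p)
}.

Definition mdeg (d : nat) (al : {ffun 'I_d -> nat}) : nat := (\sum_(i < d) al i)%N.

Definition overconv (V : idomainType) (pi : V) (d : nat)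
    (a : {ffun 'I_d -> nat} -> V) : Prop :=
  exists m b : nat, (0 < m)%N /\
    forall al, pdiv pi (mdeg al %/ m - b) (a al).

(* partial sum over all monomials of total degree <= n of
   sum_al j(a_al) x^al, where j : V -> R is the structure map *)
Definition psum (V : Type) (R : comPzRingType) (j : V -> R) (d : nat)
    (a : {ffun 'I_d -> nat} -> V) (x : 'I_d -> R) (n : nat) : R :=
  \sum_(al : {ffun 'I_d -> 'I_n.+1} |
          (mdeg [ffun i => nat_of_ord (al i)] <= n)%N)
     j (a [ffun i => nat_of_ord (al i)]) * \prod_(i < d) x i ^+ al i.

Definition series_converges (V : Type) (R : comPzRingType) (j : V -> R)
    (pi : V) (d : nat) (a : {ffun 'I_d -> nat} -> V) (x : 'I_d -> R) (s : R)
    : Prop :=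
  padic_lim (j pi) (psum j a x) s.

Definition weakly_complete (V : idomainType) (R : comPzRingType) (j : V -> R)
    (pi : V) : Prop :=
  padic_separated (j pi) /\
  forall (d : nat) (a : {ffun 'I_d -> nat} -> V) (x : 'I_d -> R),
    overconv pi a -> exists s, series_converges j pi a x s.

Definition weakly_fg (V : idomainType) (R : comPzRingType) (j : V -> R)
    (pi : V) : Prop :=
  exists (d : nat) (x : 'I_d -> R), forall r : R,
    exists a : {ffun 'I_d -> nat} -> V, overconv pi a /\ series_converges j pi a x r.

Definition fctf (V : idomainType) (R : comPzRingType) (j : V -> R) (pi : V)
    : Prop :=
  weakly_complete j pi /\ weakly_fg j pi.

Definition is_ideal (R : pzRingType) (I : R -> Prop) : Prop :=
  I 0 /\ (forall x y, I x -> I y -> I (x + y)) /\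
  (forall r x, I x -> I (r * x)).

Definition is_prime_ideal (R : pzRingType) (I : R -> Prop) : Prop :=
  is_ideal I /\ ~ I 1 /\ (forall x y, I (x * y) -> I x \/ I y).

Definition ext_ideal (A B : comPzRingType) (phi : A -> B) (P : A -> Prop)
    (y : B) : Prop :=
  exists (n : nat) (a : 'I_n -> A) (b : 'I_n -> B),
    (forall i, P (a i)) /\ y = \sum_(i < n) phi (a i) * b i.

(* phi : A -> B exhibits B as A[f], the weak completion of A_f: B is weakly
   complete, phi f is a unit, and B is initial among weakly complete
   A-algebras in which f becomes invertible. *)
Definition is_weak_completion_loc (V : idomainType) (pi : V)
    (A : comPzRingType) (j : V -> A) (f : A)
    (B : comPzRingType) (phi : {rmorphism A -> B}) : Prop :=
  weakly_complete (phi \o j) pi /\ is_unit (phi f) /\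
  forall (C : comPzRingType) (psi : {rmorphism A -> C}),
    weakly_complete (psi \o j) pi -> is_unit (psi f) ->
    exists chi : {rmorphism B -> C},
      (forall a, chi (phi a) = psi a) /\
      forall chi' : {rmorphism B -> C}, (forall a, chi' (phi a) = psi a) ->
        forall b, chi' b = chi b.

Definition local_with_max (L : comPzRingType) (M : L -> Prop) : Prop :=
  is_ideal M /\ ~ M 1 /\ forall x, ~ M x -> is_unit x.

(* For f outside P, the residue field kappa = Frac(A/P) is a weakly complete
   A-algebra (pi is nilpotent in it because P is open) in which f is a unit, so
   the universal property of A[f] gives compatible maps A[f] -> kappa; they glue
   to theta : A_[P] -> kappa.  The key fact is that A_f is dense in A[f]: every
   b in A[f] is a/f^k modulo pi^n, because the elements that are such a
   fraction modulo pi^n form an open, hence weakly complete, subring through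
   which the identity of A[f] factors.  So theta(b) = 0 iff a lies in P, which
   puts b in P A[f]; otherwise b becomes, in A[fa], a unit plus a multiple of
   pi^n, hence a unit (geometric series).  Thus everything outside the kernel
   P A_[P] of theta is invertible, and theta is onto since kappa consists of
   fractions of elements of A. *)

From HB Require Import structures.
From mathcomp Require Import all_boot all_order all_algebra.
From mathcomp Require Import generic_quotient ring_quotient fraction.
From mathcomp Require Import boolp ring zify.
(* After the mathcomp imports, so that [pdiv] is the pi-adic divisibility of
   [Defs] and not [prime.pdiv]. *)
From Pilot Require Import Defs.
Set Implicit Arguments. Unset Strict Implicit. Unset Printing Implicit Defensive.
Import GRing.Theory.
Local Open Scope ring_scope.
Local Open Scope quotient_scope.

Section PartialSums.
Variables (V : Type) (R : comPzRingType) (j : V -> R) (d : nat).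
Variables (a : {ffun 'I_d -> nat} -> V) (x : 'I_d -> R).

Lemma leq_mdeg (al : {ffun 'I_d -> nat}) i : (al i <= mdeg al)%N.
Proof. by rewrite /mdeg (bigD1 i) //= leq_addr. Qed.

Lemma psum_stable K N : (forall al, (K < mdeg al)%N -> j (a al) = 0) ->
  (K <= N)%N -> psum j a x N = psum j a x K.
Proof.
move=> a0 leKN.
pose nat_of n (al : {ffun 'I_d -> 'I_n}) : {ffun 'I_d -> nat} :=
  [ffun i => nat_of_ord (al i)].
have -> : psum j a x N = \sum_(al : {ffun 'I_d -> 'I_N.+1} | (mdeg (nat_of _ al) <= K)%N)
    j (a (nat_of _ al)) * \prod_(i < d) x i ^+ al i.
  rewrite /psum big_mkcond [RHS]big_mkcond; apply: eq_bigr => al _.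
  case: (leqP (mdeg (nat_of _ al)) K) => [leK|ltK]; first by rewrite (leq_trans leK leKN).
  by rewrite a0 // mul0r; case: ifP.
have leKN1 : (K.+1 <= N.+1)%N by [].
pose widen (al : {ffun 'I_d -> 'I_K.+1}) := [ffun i => widen_ord leKN1 (al i)].
have nat_of_widen al : nat_of _ (widen al) = nat_of _ al.
  by apply/ffunP => i; rewrite !ffunE.
rewrite (reindex_onto widen (fun be => [ffun i => inord (be i)])) /=.
  apply: eq_big => al; rewrite nat_of_widen.
    case: (mdeg _ <= K)%N; rewrite ?andbF ?andbT //.
    by apply/eqP/ffunP => i; apply: val_inj; rewrite !ffunE /= inordK.
  by move=> _; congr (_ * _); apply: eq_bigr => i _; rewrite ffunE.
move=> be lebe; apply/ffunP => i; apply: val_inj; rewrite !ffunE /= inordK //.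
by rewrite ltnS; apply: leq_trans lebe; have := leq_mdeg (nat_of _ be) i; rewrite ffunE.
Qed.

End PartialSums.

Lemma psum_univariate (V : Type) (R : comPzRingType) (j : V -> R) (c : nat -> V) (y : R) N :
  psum j (fun al : {ffun 'I_1 -> nat} => c (mdeg al)) (fun _ => y) N =
  \sum_(k < N.+1) j (c k) * y ^+ k.
Proof.
have mdeg1 (al : {ffun 'I_1 -> nat}) : mdeg al = al ord0 by rewrite /mdeg big_ord1.
rewrite /psum (eq_bigl xpredT) => [|al]; last by rewrite mdeg1 ffunE -ltnS ltn_ord.
rewrite (reindex (fun k : 'I_N.+1 => [ffun _ : 'I_1 => k])) /=.
  by apply: eq_bigr => k _; rewrite mdeg1 !ffunE big_ord1 ffunE.
exists (fun al : {ffun 'I_1 -> 'I_N.+1} => al ord0) => al _; first by rewrite ffunE.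
by apply/ffunP => i; rewrite ffunE (ord1 i).
Qed.

Lemma rmorph_psum (V : Type) (R S : comPzRingType) (h : {rmorphism R -> S})
    (jR : V -> R) (jS : V -> S) d a (x : 'I_d -> R) N :
  (forall v, h (jR v) = jS v) -> h (psum jR a x N) = psum jS a (h \o x) N.
Proof.
move=> hj; rewrite /psum rmorph_sum; apply: eq_bigr => al _.
by rewrite rmorphM rmorph_prod hj; congr (_ * _); apply: eq_bigr => i _; rewrite rmorphXn.
Qed.

Lemma weakly_complete_nilpotent (V : idomainType) (pi : V) (C : comPzRingType)
    (jC : {rmorphism V -> C}) n :
  jC pi ^+ n = 0 -> weakly_complete jC pi.
Proof.
move=> pin0; split=> [x /(_ n) [y ->]|d a x [m [b [m_gt0 Ha]]]].
  by rewrite pin0 mul0r.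
pose K := (m * (n + b))%N; exists (psum jC a x K) => k; exists K => N leKN.
suff -> : psum jC a x N = psum jC a x K by rewrite subrr; exists 0; rewrite mulr0.
apply: psum_stable leKN => al ltK; have [y ->] := Ha al.
have : (n + b <= mdeg al %/ m)%N by rewrite -(mulKn (n + b) m_gt0) leq_div2r // ltnW.
move=> /(leq_sub2r b); rewrite addnK => /subnKC <-.
by rewrite rmorphM rmorphXn exprD pin0 !mul0r.
Qed.

Section PiDivisibility.
Variables (R : comPzRingType) (t : R) (m : nat).

Lemma pdivD x y : pdiv t m x -> pdiv t m y -> pdiv t m (x + y).
Proof. by move=> [c ->] [e ->]; exists (c + e); rewrite mulrDr. Qed.

Lemma pdivMl r x : pdiv t m x -> pdiv t m (r * x).
Proof. by move=> [c ->]; exists (r * c); rewrite mulrCA. Qed.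

Lemma pdiv_exp k y : (m <= k)%N -> pdiv t m (t ^+ k * y).
Proof. by move/subnKC <-; exists (t ^+ (k - m) * y); rewrite exprD mulrA. Qed.

End PiDivisibility.

Lemma rmorph_unit (R S : comPzRingType) (h : {rmorphism R -> S}) x :
  is_unit x -> is_unit (h x).
Proof. by case=> y xy; exists (h y); rewrite -rmorphM xy rmorph1. Qed.

Section WeaklyCompleteUnits.
Variables (V : idomainType) (pi : V) (C : comPzRingType) (jC : {rmorphism V -> C}).
Hypothesis wcC : weakly_complete jC pi.

Lemma weakly_complete_unit1D n y : (0 < n)%N -> is_unit (1 + jC pi ^+ n * y).
Proof.
case: wcC => sepC convC n_gt0; set z := jC pi ^+ n * y.
pose c k := (- pi ^+ n) ^+ k.
pose a (al : {ffun 'I_1 -> nat}) := c (mdeg al).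
have a_overconv : overconv pi a.
  exists 1%N, 0%N; split=> // al; rewrite divn1 subn0.
  exists ((-1) ^+ mdeg al * pi ^+ (n.-1 * mdeg al)).
  rewrite /a /c (exprNn (pi ^+ n)) -exprM mulrCA -exprD; congr (_ * _ ^+ _).
  by rewrite -{1}(prednK n_gt0) mulSn.
have [s Hs] := convC 1%N a (fun _ => y) a_overconv.
have partial N : psum jC a (fun _ => y) N = \sum_(k < N.+1) (- z) ^+ k.
  rewrite psum_univariate; apply: eq_bigr => k _.
  by rewrite rmorphXn rmorphN rmorphXn -exprMn mulNr.
exists s; apply/eqP; rewrite -subr_eq0; apply/eqP; apply: sepC => m.
have [N0 HN0] := Hs m; have [e He] := HN0 (maxn N0 m) (leq_maxl _ _).
set N := maxn N0 m in He; set S := psum _ _ _ N in He.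
have -> : (1 + z) * s - 1 = (1 + z) * (s - S) + ((1 + z) * S - 1) by ring.
apply: pdivD; first by apply: pdivMl; exists e.
have geometric : (1 + z) * S - 1 = - (- z) ^+ N.+1.
  by rewrite /S partial -(subrK 1 ((- z) ^+ N.+1)) subrX1; ring.
rewrite geometric exprNn /z exprMn -exprM.
have -> : - ((-1) ^+ N.+1 * (jC pi ^+ (n * N.+1) * y ^+ N.+1)) =
          jC pi ^+ (n * N.+1) * - ((-1) ^+ N.+1 * y ^+ N.+1) by ring.
by apply: pdiv_exp; apply: leq_trans (leq_maxr N0 m) _; rewrite -/N; nia.
Qed.

Lemma weakly_complete_unitD n v y :
  (0 < n)%N -> is_unit v -> is_unit (v + jC pi ^+ n * y).
Proof.
move=> n_gt0 [w vw]; have [r Hr] := weakly_complete_unit1D (w * y) n_gt0.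
by exists (w * r); rewrite mulrA mulrDl vw -mulrA [y * w]mulrC.
Qed.

End WeaklyCompleteUnits.

Section OpenSubring.
Variables (B : comPzRingType) (S : subringClosed B).

Definition subring := {x : B | x \in S}.
HB.instance Definition _ := [isSub of subring for @sval _ _].
HB.instance Definition _ := [Choice of subring by <:].
Let S_subring_closed : subring_closed S.
Proof. by split=> [|x y|x y]; [exact: rpred1|exact: rpredB|exact: rpredM]. Qed.
HB.instance Definition _ :=
  GRing.SubChoice_isSubComPzRing.Build B (fun x => x \in S) subring S_subring_closed.

Variables (V : idomainType) (pi : V) (jB : V -> B) (jS : V -> subring) (n : nat).
Hypotheses (val_jS : forall v, val (jS v) = jB v) (wcB : weakly_complete jB pi).
Hypothesis S_open : forall c, jB pi ^+ n * c \in S.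

Lemma weakly_complete_subring : weakly_complete jS pi.
Proof.
case: wcB => sepB convB; split=> [x x_pdiv|d a x a_overconv].
  apply: val_inj; rewrite rmorph0; apply: sepB => m; have [y ->] := x_pdiv m.
  by exists (val y); rewrite -val_jS -rmorphXn -rmorphM.
have [s Hs] := convB d a (val \o x) a_overconv.
have psum_val N : val (psum jS a x N) = psum jB a (val \o x) N by apply: rmorph_psum.
have s_in : s \in S.
  have [N HN] := Hs n; have [c Hc] := HN N (leqnn N).
  rewrite -(subrK (psum jB a (val \o x) N) s) Hc -psum_val.
  by rewrite rpredD ?S_open // (valP (psum jS a x N)).
exists (Sub s s_in) => m; have [N HN] := Hs (m + n)%N; exists N => k leNk.
have [c Hc] := HN k leNk; exists (Sub (jB pi ^+ n * c) (S_open c)).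
apply: val_inj; transitivity (s - psum jB a (val \o x) k).
  by rewrite -psum_val rmorphB.
by rewrite Hc exprD -mulrA rmorphM -{1}val_jS -rmorphXn.
Qed.

End OpenSubring.

Section Approximation.
Variables (V : idomainType) (pi : V) (A : comPzRingType) (j : {rmorphism V -> A}).
Variables (f : A) (Bf : comPzRingType) (ph : {rmorphism A -> Bf}) (n : nat).
Local Notation t := (ph (j pi)).

(* [x] is congruent to [a / f ^+ k] modulo [pi ^+ n], stated without inverting [f]. *)
Definition approximable : {pred Bf} :=
  fun x => `[< exists a k c, ph f ^+ k * x = ph a + t ^+ n * c >].

Lemma approximable_subring_closed : subring_closed approximable.
Proof.
split=> [|x y|x y]; rewrite /approximable.
- by apply/asboolP; exists 1, 0%N, 0; rewrite rmorph1 expr0 mul1r mulr0 addr0.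
- move=> /asboolP[a [k [c xE]]] /asboolP[a' [k' [c' yE]]]; apply/asboolP.
  exists (f ^+ k' * a - f ^+ k * a'), (k + k')%N, (ph f ^+ k' * c - ph f ^+ k * c').
  have -> : ph f ^+ (k + k') * (x - y) =
            ph f ^+ k' * (ph f ^+ k * x) - ph f ^+ k * (ph f ^+ k' * y).
    by rewrite exprD; ring.
  by rewrite xE yE rmorphB !rmorphM !rmorphXn; ring.
- move=> /asboolP[a [k [c xE]]] /asboolP[a' [k' [c' yE]]]; apply/asboolP.
  exists (a * a'), (k + k')%N, (ph a * c' + c * ph a' + t ^+ n * c * c').
  by rewrite rmorphM exprD mulrACA xE yE; ring.
Qed.

HB.instance Definition _ := GRing.isSubringClosed.Build Bf approximable
  approximable_subring_closed.

Lemma approximable_ph a : ph a \in approximable.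
Proof. by apply/asboolP; exists a, 0%N, 0; rewrite expr0 mul1r mulr0 addr0. Qed.

Lemma approximable_open c : t ^+ n * c \in approximable.
Proof. by apply/asboolP; exists 0, 0%N, c; rewrite expr0 mul1r rmorph0 add0r. Qed.

Definition approx_ph (a : A) : subring approximable := Sub (ph a) (approximable_ph a).

Lemma approx_ph_is_zmod_morphism : zmod_morphism approx_ph.
Proof. by move=> x y; apply: val_inj; rewrite [RHS]rmorphB /= rmorphB. Qed.
HB.instance Definition _ :=
  GRing.isZmodMorphism.Build A (subring approximable) approx_ph approx_ph_is_zmod_morphism.

Lemma approx_ph_is_monoid_morphism : monoid_morphism approx_ph.
Proof.
split=> [|x y]; apply: val_inj; first by rewrite rmorph1 /= rmorph1.
by rewrite [RHS]rmorphM /= rmorphM.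
Qed.
HB.instance Definition _ := GRing.isMonoidMorphism.Build A (subring approximable)
  approx_ph approx_ph_is_monoid_morphism.

Lemma weak_completion_loc_approx u :
  is_weak_completion_loc pi j f ph -> ph f * u = 1 ->
  forall b, exists a k c, b = ph a * u ^+ k + t ^+ n * c.
Proof.
move=> [wcB [f_unit univB]] fu b.
have wcS : weakly_complete (approx_ph \o j) pi.
  exact: (weakly_complete_subring (jB := ph \o j)) wcB approximable_open.
have u_in : u \in approximable.
  by apply/asboolP; exists 1, 1%N, 0; rewrite expr1 fu rmorph1 mulr0 addr0.
have unitS : is_unit (approx_ph f).
  by exists (Sub u u_in); apply: val_inj; rewrite rmorphM rmorph1 /= fu.
have [chi [chi_ph _]] := univB _ approx_ph wcS unitS.
have [id0 [_ id0_unique]] := univB _ ph wcB f_unit.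
have chiK : val (chi b) = b.
  have -> : val (chi b) = id0 b.
    by apply: (id0_unique (val \o chi)) => a /=; rewrite chi_ph.
  by rewrite -(id0_unique idfun).
have := valP (chi b); rewrite chiK => /asboolP[a [k [c fb]]].
exists a, k, (u ^+ k * c).
by rewrite -[b]mul1r -(expr1n _ k) -fu exprMn mulrAC fb; ring.
Qed.

End Approximation.

Lemma fraction_numden (R : idomainType) (z : {fraction R}) :
  exists x y : R, y != 0 /\ z = tofrac x / tofrac y.
Proof.
elim/quotW: z => r; have dr := denom_ratioP r.
exists \n_r, \d_r; split => //; apply: (canRL (mulfK _)); first by rewrite tofrac_eq0.
rewrite /GRing.mul /= !piE; apply/eqmodP; rewrite /= FracField.equivfE /FracField.mulf /=.
by rewrite !numden_Ratio ?mulf_neq0 ?oner_eq0 // !mulr1 mulrC.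
Qed.

Section PrimeIdeal.
Variables (A : comPzRingType) (P : A -> Prop) (HP : is_prime_ideal P).

Lemma prime_ideal0 : P 0. Proof. by case: HP => [[]]. Qed.

Lemma prime_ideal1 : ~ P 1. Proof. by case: HP => _ []. Qed.

Lemma prime_idealM x y : ~ P x -> ~ P y -> ~ P (x * y).
Proof. by case: HP => _ [_ Pprime] Px Py /Pprime[]. Qed.

(* [ring_quotient] works over nontrivial rings; [1 != 0] in [A] since [P] is proper. *)
Definition nzcarrier : Type := A.
HB.instance Definition _ := GRing.ComPzRing.on nzcarrier.

Lemma nzcarrier_oner_neq0 : (1 : nzcarrier) != 0.
Proof. by apply/eqP => e; apply: prime_ideal1; rewrite e; exact: prime_ideal0. Qed.
HB.instance Definition _ :=
  GRing.PzSemiRing_isNonZero.Build nzcarrier nzcarrier_oner_neq0.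

Definition prime_pred : {pred nzcarrier} := fun a => `[< P a >].

Lemma prime_pred_idealr_closed : idealr_closed prime_pred.
Proof.
case: HP => [[P0 [PD PM]] [P1 _]]; split; rewrite /prime_pred; try exact/asboolP.
by move=> a x y /asboolP Px /asboolP Py; apply/asboolP; apply: PD => //; apply: PM.
Qed.
HB.instance Definition _ := isIdealr.Build nzcarrier prime_pred prime_pred_idealr_closed.

Lemma prime_pred_prime : prime_idealr_closed prime_pred.
Proof.
case: HP => _ [_ Pprime] x y /asboolP /Pprime[] Pxy; apply/orP; [left|right]; exact/asboolP.
Qed.
HB.instance Definition _ := isPrimeIdealrClosed.Build nzcarrier prime_pred prime_pred_prime.

Definition residue_domain := {ideal_quot prime_pred}.
HB.instance Definition _ := GRing.ComNzRing.on residue_domain.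

(* [fraction] needs an [idomainType], so the quotient gets (classically chosen) inverses. *)
Definition residue_unit : pred residue_domain := fun x => `[< exists y, y * x = 1 >].
Definition residue_inv (x : residue_domain) : residue_domain :=
  if pselect (exists y, y * x = 1) is left ex then projT1 (cid ex) else x.

Lemma residue_mulVr : {in residue_unit, left_inverse 1 residue_inv *%R}.
Proof.
move=> x /asboolP ex; rewrite /residue_inv; case: pselect => // ex'.
exact: (projT2 (cid ex')).
Qed.

Lemma residue_unitP x y : y * x = 1 -> residue_unit x.
Proof. by move=> yx; apply/asboolP; exists y. Qed.

Lemma residue_inv_out : {in [predC residue_unit], residue_inv =1 id}.
Proof.
move=> x /negP nux; rewrite /residue_inv; case: pselect => // ex.
by case: nux; apply/asboolP.
Qed.

HB.instance Definition _ := GRing.ComNzRing_hasMulInverse.Build residue_domain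
  residue_mulVr residue_unitP residue_inv_out.
HB.instance Definition _ := GRing.ComUnitRing_isIntegral.Build residue_domain
  (@Quotient.rquot_IdomainAxiom _ _).

Definition residue_field := {fraction residue_domain}.
Definition residue_map (a : A) : residue_field :=
  tofrac (\pi_residue_domain a : residue_domain).

Lemma residue_map_is_zmod_morphism : zmod_morphism residue_map.
Proof. by move=> x y; rewrite /residue_map -rmorphB; congr tofrac; exact: rmorphB. Qed.
HB.instance Definition _ :=
  GRing.isZmodMorphism.Build A residue_field residue_map residue_map_is_zmod_morphism.

Lemma residue_map_is_monoid_morphism : monoid_morphism residue_map.
Proof.
split=> [|x y]; rewrite /residue_map.
  by rewrite -(rmorph1 (@tofrac residue_domain)); congr tofrac; exact: rmorph1.
by rewrite -rmorphM; congr tofrac; exact: rmorphM.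
Qed.
HB.instance Definition _ :=
  GRing.isMonoidMorphism.Build A residue_field residue_map residue_map_is_monoid_morphism.

Lemma residue_map_eq0 a : residue_map a = 0 <-> P a.
Proof.
rewrite /residue_map; apply: (iff_trans (rwP eqP)).
rewrite tofrac_eq0 -(rmorph0 \pi_residue_domain) -Quotient.idealrBE subr0.
by split=> /asboolP.
Qed.

Lemma residue_map_frac z : exists a b, ~ P b /\ z = residue_map a / residue_map b.
Proof.
have [x [y [y_neq0 ->]]] := fraction_numden z.
exists (repr x), (repr y); rewrite /residue_map !reprK; split=> // Py; move: y_neq0.
rewrite -[y]reprK -(rmorph0 \pi_residue_domain) -Quotient.idealrBE subr0.
by case/negP; apply/asboolP.
Qed.

End PrimeIdeal.

Section LocalizationAtPrime.
Variables (V : idomainType) (pi : V) (A : comPzRingType) (j : {rmorphism V -> A}).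
Variables (P : A -> Prop) (HP : is_prime_ideal P) (n : nat).
Hypothesis Pn : P (j pi ^+ n).
Variables (B : A -> comPzRingType) (phi : forall f, {rmorphism A -> B f}).
Hypothesis HB : forall f, ~ P f -> is_weak_completion_loc pi j f (phi f).
Variable tr : forall f g, {rmorphism B f -> B (f * g)}.
Hypothesis Htr : forall f g, ~ P (f * g) -> forall a, tr f g (phi f a) = phi (f * g) a.
Variables (L : comPzRingType) (iota : forall f, {rmorphism B f -> L}).
Hypothesis Hcompat :
  forall f g, ~ P (f * g) -> forall b, iota (f * g) (tr f g b) = iota f b.
Hypothesis Hsurj : forall x : L, exists f, ~ P f /\ exists b, x = iota f b.
Hypothesis Hker :
  forall f b, ~ P f -> iota f b = 0 -> exists g, ~ P (f * g) /\ tr f g b = 0.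

Local Notation kappa := (residue_field HP).
Local Notation alpha := (residue_map HP).
Local Notation nPM := (prime_idealM HP).

Lemma open_exponent_gt0 : (0 < n)%N.
Proof. by move: Pn; case: (posnP n) => [->|//]; rewrite expr0 => /(prime_ideal1 HP). Qed.

Lemma residue_pi_nilpotent : alpha (j pi) ^+ n = 0.
Proof. by rewrite -rmorphXn; apply/residue_map_eq0. Qed.

Lemma weakly_complete_residue : weakly_complete (alpha \o j) pi.
Proof. exact: (weakly_complete_nilpotent (jC := alpha \o j) residue_pi_nilpotent). Qed.

Lemma residue_map_neq0 f : ~ P f -> alpha f != 0.
Proof. by move=> Pf; apply/eqP => /residue_map_eq0. Qed.

Lemma residue_map_unit f : ~ P f -> is_unit (alpha f).
Proof. by move=> Pf; exists (alpha f)^-1; rewrite mulfV // residue_map_neq0. Qed.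

Definition residueB_spec f (Hf : ~ P f) :=
  cid ((HB Hf).2.2 kappa alpha weakly_complete_residue (residue_map_unit Hf)).

Definition residueB f (Hf : ~ P f) : {rmorphism B f -> kappa} :=
  proj1_sig (residueB_spec Hf).

Lemma residueB_phi f (Hf : ~ P f) a : residueB Hf (phi f a) = alpha a.
Proof. exact: (proj1 (proj2_sig (residueB_spec Hf))). Qed.

Lemma residueB_unique f (Hf : ~ P f) (c : {rmorphism B f -> kappa}) :
  (forall a, c (phi f a) = alpha a) -> forall b, c b = residueB Hf b.
Proof. exact: (proj2 (proj2_sig (residueB_spec Hf))). Qed.

Lemma residueB_tr f g (Hf : ~ P f) (Hfg : ~ P (f * g)) b :
  residueB Hfg (tr f g b) = residueB Hf b.
Proof.
apply: (@residueB_unique _ Hf (residueB Hfg \o tr f g)) => a /=.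
by rewrite Htr // residueB_phi.
Qed.

(* [B (g * f)] and [B (f * g)] are different rings; [castB] transports along [mulrC]. *)
Definition castB f g (e : f = g) (b : B f) : B g := eq_rect f B b g e.

Lemma iota_castB f g (e : f = g) b : iota g (castB e b) = iota f b.
Proof. by case: g / e. Qed.

Lemma residueB_castB f g (e : f = g) (Hf : ~ P f) (Hg : ~ P g) b :
  residueB Hg (castB e b) = residueB Hf b.
Proof. by case: g / e Hg => Hg; rewrite (Prop_irrelevance Hf Hg). Qed.

Lemma common_refinement f g (Hf : ~ P f) (Hg : ~ P g) (b : B f) (c : B g) :
  exists b' c' : B (f * g),
    [/\ iota (f * g) b' = iota f b, iota (f * g) c' = iota g c,
        residueB (nPM Hf Hg) b' = residueB Hf b &
        residueB (nPM Hf Hg) c' = residueB Hg c].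
Proof.
have e : g * f = f * g by rewrite mulrC.
have Hgf : ~ P (g * f) by rewrite e; apply: nPM.
exists (tr f g b), (castB e (tr g f c)); split.
- exact: Hcompat (nPM Hf Hg) b.
- by rewrite iota_castB Hcompat.
- exact: residueB_tr.
- by rewrite (residueB_castB e Hgf) residueB_tr.
Qed.

Lemma residueB_compat f g (Hf : ~ P f) (Hg : ~ P g) b c :
  iota f b = iota g c -> residueB Hf b = residueB Hg c.
Proof.
move=> bc; have [b' [c' [b'E c'E <- <-]]] := common_refinement Hf Hg b c.
apply/eqP; rewrite -subr_eq0 -rmorphB; apply/eqP.
have [k [Hk trk0]] : exists k, ~ P (f * g * k) /\ tr _ k (b' - c') = 0.
  by apply: Hker; rewrite ?rmorphB ?b'E ?c'E ?bc ?subrr //; apply: nPM.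
by rewrite -(residueB_tr _ Hk) trk0 rmorph0.
Qed.

Definition residueL (x : L) : kappa :=
  let: exist f Hf := cid (Hsurj x) in residueB (proj1 Hf) (proj1_sig (cid (proj2 Hf))).

Lemma residueL_iota f (Hf : ~ P f) b : residueL (iota f b) = residueB Hf b.
Proof.
rewrite /residueL; case: cid => g [Hg ex] /=; case: cid => c bc /=.
by symmetry; apply: residueB_compat.
Qed.

Lemma common_iota x y : exists h (Hh : ~ P h) (b c : B h), x = iota h b /\ y = iota h c.
Proof.
have [f [Hf [b ->]]] := Hsurj x; have [g [Hg [c ->]]] := Hsurj y.
have [b' [c' [<- <- _ _]]] := common_refinement Hf Hg b c.
by exists (f * g), (nPM Hf Hg), b', c'.
Qed.

Lemma residueL_is_zmod_morphism : zmod_morphism residueL.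
Proof.
move=> x y; have [h [Hh [b [c [-> ->]]]]] := common_iota x y.
by rewrite -rmorphB !(residueL_iota Hh) rmorphB.
Qed.
HB.instance Definition _ :=
  GRing.isZmodMorphism.Build L kappa residueL residueL_is_zmod_morphism.

Lemma residueL_is_monoid_morphism : monoid_morphism residueL.
Proof.
split=> [|x y].
  by rewrite -(rmorph1 (iota 1)) (residueL_iota (prime_ideal1 HP)) rmorph1.
have [h [Hh [b [c [-> ->]]]]] := common_iota x y.
by rewrite -rmorphM !(residueL_iota Hh) rmorphM.
Qed.
HB.instance Definition _ :=
  GRing.isMonoidMorphism.Build L kappa residueL residueL_is_monoid_morphism.

(* The instances above depend on [Htr], [Hcompat] and [Hker], which cannot be
   inferred from [residueL] alone outside this section. *)
Definition residueL_rmorphism : {rmorphism L -> kappa} := residueL.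

Lemma residueB_approx f (Hf : ~ P f) b u : phi f f * u = 1 ->
  exists a k c,
    b = phi f a * u ^+ k + phi f (j pi) ^+ n * c /\ (residueB Hf b = 0 <-> P a).
Proof.
move=> fu; have [a [k [c bE]]] := weak_completion_loc_approx n (HB Hf) fu b.
exists a, k, c; split=> //; rewrite -(residue_map_eq0 HP) bE.
have fu' : alpha f * residueB Hf u = 1 by rewrite -(residueB_phi Hf) -rmorphM fu rmorph1.
have uk_neq0 : residueB Hf u ^+ k != 0.
  rewrite expf_neq0 //; apply/eqP => u0; move: fu'.
  by rewrite u0 mulr0 => /eqP; rewrite eq_sym oner_eq0.
rewrite rmorphD !rmorphM !rmorphXn !residueB_phi residue_pi_nilpotent mul0r addr0.
split=> [/eqP|->]; last by rewrite mul0r.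
by rewrite mulf_eq0 (negPf uk_neq0) orbF => /eqP.
Qed.

Definition maxL : L -> Prop :=
  fun x => exists f, ~ P f /\ exists b, ext_ideal (phi f) P b /\ x = iota f b.

Lemma residueL_eq0 x : residueL x = 0 <-> maxL x.
Proof.
split=> [|[f [Hf [b [[m [a [c [Pa ->]]]] ->]]]]]; last first.
  rewrite (residueL_iota Hf) rmorph_sum big1 // => i _.
  by rewrite rmorphM residueB_phi (proj2 (residue_map_eq0 HP _) (Pa i)) mul0r.
have [f [Hf [b ->]]] := Hsurj x; rewrite (residueL_iota Hf) => b0.
have [u fu] := (HB Hf).2.1.
have [a [k [c [bE /iffLR/(_ b0) Pa]]]] := residueB_approx Hf b fu.
exists f; split=> //; exists b; split=> //.
exists 2%N, (fun i : 'I_2 => nth 0 [:: a; j pi ^+ n] i), (fun i => nth 0 [:: u ^+ k; c] i).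
by split=> [[[|[|]]]|] //; rewrite !big_ord_recl big_ord0 /= addr0 bE rmorphXn.
Qed.

Lemma notin_maxL_unit x : ~ maxL x -> is_unit x.
Proof.
move=> maxLx; have [f [Hf [b xE]]] := Hsurj x.
have [u fu] := (HB Hf).2.1; have [a [k [c [bE Pa]]]] := residueB_approx Hf b fu.
have {}Pa : ~ P a by move/Pa; rewrite -(residueL_iota Hf) -xE => /residueL_eq0.
have Hfa : ~ P (f * a) by apply: nPM.
have fu' : phi (f * a) f * tr f a u = 1 by rewrite -(Htr Hfa) -rmorphM fu rmorph1.
have v_unit : is_unit (phi (f * a) a * tr f a u ^+ k).
  have [w faw] := (HB Hfa).2.1; rewrite rmorphM in faw.
  exists (phi (f * a) f ^+ k.+1 * w).
  transitivity ((phi (f * a) f * tr f a u) ^+ k * (phi (f * a) f * phi (f * a) a * w)).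
    by rewrite exprMn exprS; ring.
  by rewrite fu' faw expr1n mul1r.
have : is_unit (tr f a b).
  rewrite bE rmorphD !rmorphM !rmorphXn !(Htr Hfa).
  exact: (weakly_complete_unitD (HB Hfa).1 _ open_exponent_gt0 v_unit).
by move/(rmorph_unit (iota (f * a))); rewrite Hcompat // -xE.
Qed.

Lemma maxL_local : local_with_max maxL.
Proof.
split; [split; [|split]|split].
- by apply/residueL_eq0; rewrite rmorph0.
- move=> x y /residueL_eq0 x0 /residueL_eq0 y0; apply/residueL_eq0.
  by rewrite rmorphD /= x0 y0 addr0.
- by move=> r x /residueL_eq0 x0; apply/residueL_eq0; rewrite rmorphM /= x0 mulr0.
- by move/residueL_eq0/eqP; rewrite rmorph1 oner_eq0.
- exact: notin_maxL_unit.
Qed.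

Lemma residueL_surj z : exists x, residueL x = z.
Proof.
have [a [s [Hs ->]]] := residue_map_frac z; have [w sw] := (HB Hs).2.1.
exists (iota s (phi s a * w)); rewrite (residueL_iota Hs) rmorphM residueB_phi.
congr (_ * _); apply: (mulfI (residue_map_neq0 Hs)).
by rewrite mulfV ?residue_map_neq0 // -(residueB_phi Hs) -rmorphM sw rmorph1.
Qed.

End LocalizationAtPrime.

Theorem mainTheorem1
  (V : idomainType) (pi : V) (p : nat) (HV : cdvr pi p)
  (A : comPzRingType) (j : {rmorphism V -> A}) (HA : fctf j pi)
  (P : A -> Prop) (HP : is_prime_ideal P) (Hopen : exists n, P (j pi ^+ n))
  (* the rings A[f], f not in P *)
  (B : A -> comPzRingType) (phi : forall f, {rmorphism A -> B f})
  (HB : forall f, ~ P f -> is_weak_completion_loc pi j f (phi f))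
  (* transition maps A[f] -> A[fg] of the direct system *)
  (tr : forall f g, {rmorphism B f -> B (f * g)%R})
  (Htr : forall f g, ~ P (f * g) -> forall a, tr f g (phi f a) = phi (f * g) a)
  (* L = A_[P] = colim_{f notin P} A[f], with structure maps iota f *)
  (L : comPzRingType) (iota : forall f, {rmorphism B f -> L})
  (Hcompat : forall f g, ~ P (f * g) -> forall b, iota (f * g) (tr f g b) = iota f b)
  (Hsurj : forall x : L, exists f, ~ P f /\ exists b, x = iota f b)
  (Hker : forall f b, ~ P f -> iota f b = 0 ->
            exists g, ~ P (f * g) /\ tr f g b = 0) :
  let PL : L -> Prop :=
    fun x => exists f, ~ P f /\ exists b, ext_ideal (phi f) P b /\ x = iota f b in
  local_with_max PL /\
  exists (kappa : fieldType) (theta : {rmorphism L -> kappa})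
         (alpha : {rmorphism A -> kappa}),
    (forall z, exists x, theta x = z) /\
    (forall x, theta x = 0 <-> PL x) /\
    (forall a, alpha a = 0 <-> P a) /\
    (forall z, exists a b, ~ P b /\ z = alpha a / alpha b).
Proof.
move=> PL; have [n Pn] := Hopen.
split; first exact: (maxL_local HP Pn HB Htr Hcompat Hsurj Hker).
exists (residue_field HP), (residueL_rmorphism HP Pn HB Htr Hcompat Hsurj Hker).
exists (residue_map HP).
split; first exact: (residueL_surj Pn HB Htr Hcompat Hsurj Hker).
split; first exact: (residueL_eq0 HP Pn HB Htr Hcompat Hsurj Hker).
split; [exact: (residue_map_eq0 HP) | exact: (@residue_map_frac _ _ HP)].
Qed.
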